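(* (1) For every subset $R\subseteq B$: if $R$ is top terminating relative to $T$, then $R$ is terminating relative to $T$. (2) For every subset $Q\subseteq D_T$: if $\overline{Q}$ is top terminating relative to $\overline{T}$, then $\overline{Q}$ is terminating relative to $\overline{T}$.
   Context: For an SRS $R$ over $\Sigma$, $\to_R=\{(u\ell v,urv): u,v\in\Sigma^*, \ell\to r\in R\}$ and the top rewrite relation is $\to_{R_{\mathrm{top}}}=\{(\ell v,rv): v\in\Sigma^*,\ell\to r\in R\}$. For relations $\to_1,\to_2$, ''$\to_1$ is terminating relative to $\to_2$'' means there is no infinite sequence $s_0,s_1,\dots$ with $s_i\to_1 s_{i+1}$ for infinitely many $i$ and $s_i\to_2 s_{i+1}$ for all other $i$. ''$R$ terminating relative to $S$'' refers to $\to_R$ vs $\to_S$; ''$R$ top terminating relative to $S$'' refers to $\to_{R_{\mathrm{top}}}$ vs $\to_S$. The reversal of a string $s_1\cdots s_n$ is $s_n\cdots s_1$ and $\overline{R}=\{\overline{\ell}\to\overline{r}:\ell\to r\in R\}$. Alphabet $\{0_2,1_2,0_3,1_3,2_3,\lhd,\rhd\}$; $D_T=\{0_2\rhd\to\rhd,\ 1_2\rhd\to 2_3\rhd\}$; $A=\{0_20_3\to0_30_2,\ 0_21_3\to0_31_2,\ 0_22_3\to1_30_2,\ 1_20_3\to1_31_2,\ 1_21_3\to2_30_2,\ 1_22_3\to2_31_2\}$; $B=\{\lhd0_3\to\lhd1_2,\ \lhd1_3\to\lhd0_20_2,\ \lhd2_3\to\lhd0_21_2\}$; $T=D_T\cup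 A\cup B$. *)

From Stdlib Require Import List.
Import ListNotations.

(* The alphabet {0_2,1_2,0_3,1_3,2_3,<|,|>}. *)
Inductive sym : Type := s02 | s12 | s03 | s13 | s23 | lhd | rhd.

Definition word := list sym.
Definition rule := (word * word)%type.
Definition srs := rule -> Prop.

Definition subsrs (R S : srs) : Prop := forall p, R p -> S p.

Definition rstep (R : srs) (s t : word) : Prop :=
  exists u v l r, R (l, r) /\ s = u ++ l ++ v /\ t = u ++ r ++ v.

Definition topstep (R : srs) (s t : word) : Prop :=
  exists v l r, R (l, r) /\ s = l ++ v /\ t = r ++ v.

Definition rel_terminating (step1 step2 : word -> word -> Prop) : Prop :=
  ~ exists f : nat -> word,
      (forall i, step1 (f i) (f (S i)) \/ step2 (f i) (f (S i))) /\
      (forall n, exists i, n <= i /\ step1 (f i) (f (S i))).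

Definition terminating_rel (R S : srs) : Prop := rel_terminating (rstep R) (rstep S).
Definition top_terminating_rel (R S : srs) : Prop := rel_terminating (topstep R) (rstep S).

Definition rev_srs (R : srs) : srs :=
  fun p => exists l r, R (l, r) /\ p = (rev l, rev r).

Definition D_T : srs := fun p =>
  p = ([s02; rhd], [rhd]) \/ p = ([s12; rhd], [s23; rhd]).

Definition A_rules : srs := fun p =>
  p = ([s02; s03], [s03; s02]) \/
  p = ([s02; s13], [s03; s12]) \/
  p = ([s02; s23], [s13; s02]) \/
  p = ([s12; s03], [s13; s12]) \/
  p = ([s12; s13], [s23; s02]) \/
  p = ([s12; s23], [s23; s12]).

Definition B_rules : srs := fun p =>
  p = ([lhd; s03], [lhd; s12]) \/
  p = ([lhd; s13], [lhd; s02; s02]) \/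
  p = ([lhd; s23], [lhd; s02; s12]).

Definition T_rules : srs := fun p => D_T p \/ A_rules p \/ B_rules p.

From Stdlib Require Import List Lia Wf_nat Classical ClassicalEpsilon.
Import ListNotations.

(* Relative top termination implies relative termination, for rule sets
   guarded by a marker letter c.

   Suppose every rule of T either avoids c or has the form  c l' -> c r'
   with l', r' c-free, and every rule of R has the latter form with l' <> r'.
   Cut a word at the occurrences of c into "blocks" (an occurrence of c and
   the c-free stretch after it).  Rewriting never changes the number of
   blocks and acts inside a single block; an R-step is a top step of the
   block it touches, a T-step is a T-step (or nothing) on every block.
   Given an infinite R/T-sequence with infinitely many R-steps, the
   pigeonhole principle yields one block receiving infinitely many R-steps;
   following that block and deleting the steps that leave it unchanged gives
   an infinite top-R/T-sequence. *)

Section Enumeration.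

Variable P : nat -> Prop.
Hypothesis P_infinite : forall n, exists i, n <= i /\ P i.

Lemma least_above (n : nat) :
  exists j, n <= j /\ P j /\ forall k, n <= k < j -> ~ P k.
Proof.
  destruct (dec_inh_nat_subset_has_unique_least_element (fun j => n <= j /\ P j))
    as (j & ((Hnj & Hj) & Hleast) & _).
  - intros j; apply classic.
  - apply P_infinite.
  - exists j; repeat split; auto.
    intros k Hk HPk; specialize (Hleast k (conj (proj1 Hk) HPk)); lia.
Qed.

Definition next_at (n : nat) : nat :=
  proj1_sig (constructive_indefinite_description _ (least_above n)).

Lemma next_at_spec (n : nat) :
  n <= next_at n /\ P (next_at n) /\ forall k, n <= k < next_at n -> ~ P k.
Proof. exact (proj2_sig (constructive_indefinite_description _ (least_above n))). Qed.

Lemma next_at_unique (n j : nat) :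
  n <= j -> P j -> (forall k, n <= k < j -> ~ P k) -> next_at n = j.
Proof.
  intros Hnj Hj Hgap; destruct (next_at_spec n) as (Hn & Hnext & Hgap').
  destruct (PeanoNat.Nat.lt_total (next_at n) j) as [Hlt | [Heq | Hgt]]; auto.
  - exfalso; exact (Hgap _ (conj Hn Hlt) Hnext).
  - exfalso; exact (Hgap' _ (conj Hnj Hgt) Hj).
Qed.

Fixpoint nth_at (k : nat) : nat :=
  match k with
  | 0 => next_at 0
  | S k' => next_at (S (nth_at k'))
  end.

Lemma nth_at_P (k : nat) : P (nth_at k).
Proof. destruct k; apply next_at_spec. Qed.

Lemma nth_at_gap (k i : nat) : nth_at k < i < nth_at (S k) -> ~ P i.
Proof. intros Hi; apply (next_at_spec (S (nth_at k))); simpl in Hi; lia. Qed.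

Lemma nth_at_increasing (k k' : nat) : k < k' -> nth_at k < nth_at k'.
Proof.
  induction 1 as [| k' _ IH]; simpl.
  - pose proof (proj1 (next_at_spec (S (nth_at k)))); lia.
  - pose proof (proj1 (next_at_spec (S (nth_at k')))); lia.
Qed.

Lemma nth_at_onto (i : nat) : P i -> exists k, nth_at k = i.
Proof.
  assert (Hreach : forall n, exists k, nth_at k = next_at n).
  { intros n; induction n as [| n (k & Hk)]; [exists 0; reflexivity |].
    destruct (next_at_spec n) as (Hn & Hnext & Hgap).
    destruct (classic (P n)) as [HPn | HnPn].
    - exists (S k); simpl; rewrite Hk, (next_at_unique n n); auto; intros; lia.
    - exists k; rewrite Hk; symmetry; apply next_at_unique; auto.
      + assert (next_at n <> n) by (intros E; rewrite E in Hnext; contradiction); lia.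
      + intros m Hm; apply Hgap; lia. }
  intros HPi; destruct (Hreach i) as [k Hk]; exists k.
  rewrite Hk; apply next_at_unique; auto; intros; lia.
Qed.

End Enumeration.

Lemma constant_between {A : Type} (g : nat -> A) (i j : nat) :
  i <= j -> (forall k, i <= k < j -> g k = g (S k)) -> g i = g j.
Proof.
  induction 1 as [| j Hij IH]; intros Hconst; auto.
  rewrite IH by (intros; apply Hconst; lia); apply Hconst; lia.
Qed.

(* A sequence whose steps are step1, step2 or stuttering (no change), with
   infinitely many step1-steps and step1 irreflexive, still refutes relative
   termination: its changing steps form the required infinite sequence. *)
Lemma stutter_removal (step1 step2 : word -> word -> Prop) (g : nat -> word) :
  (forall x, ~ step1 x x) ->
  (forall i, g i = g (S i) \/ step1 (g i) (g (S i)) \/ step2 (g i) (g (S i))) ->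
  (forall n, exists i, n <= i /\ step1 (g i) (g (S i))) ->
  ~ rel_terminating step1 step2.
Proof.
  intros Hirrefl Hsteps Hinf.
  pose (moves := fun i => g i <> g (S i)).
  assert (Hmoves : forall i, step1 (g i) (g (S i)) -> moves i).
  { intros i Hs E; rewrite E in Hs; exact (Hirrefl _ Hs). }
  assert (Hmoves_inf : forall n, exists i, n <= i /\ moves i).
  { intros n; destruct (Hinf n) as (i & Hi & Hs); eauto. }
  pose (e := nth_at moves Hmoves_inf).
  (* between two consecutive changing steps the sequence is constant *)
  assert (Hnext : forall k, g (S (e k)) = g (e (S k))).
  { intros k; pose proof (nth_at_increasing moves Hmoves_inf k (S k)).
    apply constant_between; unfold e in *; [lia |].
    intros j Hj; apply NNPP, (nth_at_gap moves Hmoves_inf k j); lia. }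
  intros Hterm; apply Hterm; exists (fun k => g (e k)); split; cbv beta.
  - intros k; rewrite <- Hnext.
    destruct (Hsteps (e k)) as [E | Hs]; auto.
    exfalso; exact (nth_at_P moves Hmoves_inf k E).
  - intros N; destruct (Hinf (e N)) as (i & Hi & Hs).
    destruct (nth_at_onto moves Hmoves_inf i (Hmoves i Hs)) as [k Hk].
    exists k; split.
    + destruct (PeanoNat.Nat.le_gt_cases N k) as [| Hlt]; auto.
      pose proof (nth_at_increasing moves Hmoves_inf k N Hlt); unfold e in *; lia.
    + rewrite <- Hnext; unfold e; rewrite Hk; exact Hs.
Qed.

Lemma pigeonhole (K : nat) (P : nat -> nat -> Prop) :
  (forall n, exists i, n <= i /\ exists j, j < K /\ P i j) ->
  exists j, forall n, exists i, n <= i /\ P i j.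
Proof.
  revert P; induction K as [| K IH]; intros P HP.
  - destruct (HP 0) as (i & _ & j & Hj & _); lia.
  - destruct (classic (forall n, exists i, n <= i /\ P i K)) as [HK | HK]; [eauto |].
    apply not_all_ex_not in HK; destruct HK as [N HN].
    destruct (IH (fun i j => P (i + N) j)) as [j Hj].
    + intros n; destruct (HP (n + N)) as (i & Hi & j & Hj & Hp).
      exists (i - N); split; [lia |]; exists j; split.
      * destruct (PeanoNat.Nat.eq_dec j K) as [-> |]; [| lia].
        exfalso; apply HN; exists i; split; [lia | auto].
      * replace (i - N + N) with i by lia; auto.
    + exists j; intros n; destruct (Hj n) as (i & Hi & Hp).
      exists (i + N); split; [lia | auto].
Qed.

Definition sym_eq_dec (x y : sym) : {x = y} + {x <> y}.
Proof. decide equality. Defined.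

Definition occurrences (c : sym) (w : word) : nat := count_occ sym_eq_dec w c.

Fixpoint cfree_prefix (c : sym) (w : word) : word :=
  match w with
  | [] => []
  | x :: w' => if sym_eq_dec x c then [] else x :: cfree_prefix c w'
  end.

(* The j-th c-block of w (counting from 0): the (j+1)-st occurrence of c
   followed by the c-free stretch after it; empty if c occurs at most j times. *)
Fixpoint block (c : sym) (j : nat) (w : word) : word :=
  match w with
  | [] => []
  | x :: w' =>
      if sym_eq_dec x c then
        match j with 0 => c :: cfree_prefix c w' | S j' => block c j' w' end
      else block c j w'
  end.

Lemma cfree_prefix_app (c : sym) (m v : word) :
  ~ In c m -> cfree_prefix c (m ++ v) = m ++ cfree_prefix c v.
Proof.
  induction m as [| x m IH]; simpl; intros Hm; auto.
  destruct (sym_eq_dec x c); [subst; tauto |]; rewrite IH; auto.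
Qed.

Lemma block_app (c : sym) (j : nat) (m v : word) :
  ~ In c m -> block c j (m ++ v) = block c j v.
Proof.
  induction m as [| x m IH]; simpl; intros Hm; auto.
  destruct (sym_eq_dec x c); [subst; tauto | auto].
Qed.

Lemma cfree_prefix_marker (c : sym) (u w1 w2 : word) :
  cfree_prefix c (u ++ c :: w1) = cfree_prefix c (u ++ c :: w2).
Proof.
  induction u as [| x u IH]; simpl.
  - destruct (sym_eq_dec c c); congruence.
  - destruct (sym_eq_dec x c); congruence.
Qed.

Lemma cfree_prefix_replace (c : sym) (u m m' v : word) :
  ~ In c m -> ~ In c m' ->
  cfree_prefix c (u ++ m ++ v) = cfree_prefix c (u ++ m' ++ v) \/
  exists u1 v1, cfree_prefix c (u ++ m ++ v) = u1 ++ m ++ v1 /\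
                cfree_prefix c (u ++ m' ++ v) = u1 ++ m' ++ v1.
Proof.
  intros Hm Hm'; induction u as [| x u IH]; simpl.
  - right; exists [], (cfree_prefix c v); rewrite !cfree_prefix_app; auto.
  - destruct (sym_eq_dec x c); [left; auto |].
    destruct IH as [E | (u1 & v1 & E1 & E2)]; [left; congruence |].
    right; exists (x :: u1), v1; rewrite E1, E2; auto.
Qed.

Lemma block_replace_cfree (c : sym) (j : nat) (u m m' v : word) :
  ~ In c m -> ~ In c m' ->
  block c j (u ++ m ++ v) = block c j (u ++ m' ++ v) \/
  exists u1 v1, block c j (u ++ m ++ v) = u1 ++ m ++ v1 /\
                block c j (u ++ m' ++ v) = u1 ++ m' ++ v1.
Proof.
  intros Hm Hm'; revert j; induction u as [| x u IH]; intros j; simpl.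
  - left; rewrite !block_app; auto.
  - destruct (sym_eq_dec x c); [| apply IH].
    destruct j as [| j]; [| apply IH].
    destruct (cfree_prefix_replace c u m m' v Hm Hm') as [E | (u1 & v1 & E1 & E2)].
    + left; congruence.
    + right; exists (c :: u1), v1; rewrite E1, E2; auto.
Qed.

Lemma block_replace_marked (c : sym) (j : nat) (u l r v : word) :
  ~ In c l -> ~ In c r ->
  (j = occurrences c u /\
   block c j (u ++ (c :: l) ++ v) = c :: l ++ cfree_prefix c v /\
   block c j (u ++ (c :: r) ++ v) = c :: r ++ cfree_prefix c v) \/
  (j <> occurrences c u /\ block c j (u ++ (c :: l) ++ v) = block c j (u ++ (c :: r) ++ v)).
Proof.
  intros Hl Hr; revert j; unfold occurrences.
  induction u as [| x u IH]; intros j; simpl.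
  - destruct (sym_eq_dec c c) as [_ | ]; [| congruence].
    destruct j as [| j].
    + left; rewrite !cfree_prefix_app; auto.
    + right; split; [lia |]; rewrite !block_app; auto.
  - destruct (sym_eq_dec x c) as [-> | ]; [| apply IH].
    destruct j as [| j].
    + right; split; [lia |]; f_equal; apply cfree_prefix_marker.
    + destruct (IH j) as [(E & E1 & E2) | (E & E1)]; [left | right]; split; auto; lia.
Qed.

Definition marked_rule (c : sym) (l r : word) : Prop :=
  exists l' r', l = c :: l' /\ r = c :: r' /\ ~ In c l' /\ ~ In c r'.

Definition respects_marker (c : sym) (T : srs) : Prop :=
  forall l r, T (l, r) -> (~ In c l /\ ~ In c r) \/ marked_rule c l r.

Definition strictly_marked (c : sym) (R : srs) : Prop :=
  forall l r, R (l, r) -> marked_rule c l r /\ l <> r.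

Lemma strictly_marked_respects (c : sym) (R : srs) :
  strictly_marked c R -> respects_marker c R.
Proof. intros HR l r H; right; apply HR, H. Qed.

Lemma strictly_marked_sub (c : sym) (R R' : srs) :
  subsrs R R' -> strictly_marked c R' -> strictly_marked c R.
Proof. intros Hsub HR' l r H; apply HR', Hsub, H. Qed.

Lemma occurrences_step (c : sym) (T : srs) (s t : word) :
  respects_marker c T -> rstep T s t -> occurrences c s = occurrences c t.
Proof.
  intros HT (u & v & l & r & Hlr & -> & ->); unfold occurrences; rewrite !count_occ_app.
  destruct (HT _ _ Hlr) as [[Hl Hr] | (l' & r' & -> & -> & Hl & Hr)]; simpl;
    [| destruct (sym_eq_dec c c); [| congruence]];
    rewrite (proj1 (count_occ_not_In _ _ _) Hl), (proj1 (count_occ_not_In _ _ _) Hr); auto.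
Qed.

Lemma block_step (c : sym) (T : srs) (j : nat) (s t : word) :
  respects_marker c T -> rstep T s t ->
  block c j s = block c j t \/ rstep T (block c j s) (block c j t).
Proof.
  intros HT (u & v & l & r & Hlr & -> & ->).
  destruct (HT _ _ Hlr) as [[Hl Hr] | (l' & r' & -> & -> & Hl & Hr)].
  - destruct (block_replace_cfree c j u l r v Hl Hr) as [E | (u1 & v1 & E1 & E2)]; auto.
    right; rewrite E1, E2; exists u1, v1, l, r; auto.
  - destruct (block_replace_marked c j u l' r' v Hl Hr) as [(_ & E1 & E2) | (_ & E)]; auto.
    right; rewrite E1, E2; exists [], (cfree_prefix c v), (c :: l'), (c :: r'); auto.
Qed.

Lemma block_marked_step (c : sym) (R : srs) (s t : word) :
  strictly_marked c R -> rstep R s t ->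
  exists j0, j0 < occurrences c s /\ topstep R (block c j0 s) (block c j0 t) /\
             forall j, j <> j0 -> block c j s = block c j t.
Proof.
  intros HR (u & v & l & r & Hlr & -> & ->).
  destruct (HR _ _ Hlr) as ((l' & r' & -> & -> & Hl & Hr) & _).
  exists (occurrences c u); repeat split.
  - unfold occurrences; rewrite count_occ_app; simpl.
    destruct (sym_eq_dec c c); [lia | congruence].
  - destruct (block_replace_marked c (occurrences c u) u l' r' v Hl Hr)
      as [(_ & E1 & E2) | (E & _)]; [| congruence].
    rewrite E1, E2; exists (cfree_prefix c v), (c :: l'), (c :: r'); auto.
  - intros j Hj; destruct (block_replace_marked c j u l' r' v Hl Hr)
      as [(E & _) | (_ & E)]; [congruence | exact E].
Qed.

Lemma topstep_irreflexive (c : sym) (R : srs) (x : word) :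
  strictly_marked c R -> ~ topstep R x x.
Proof.
  intros HR (v & l & r & Hlr & E1 & E2); rewrite E1 in E2.
  apply app_inv_tail in E2; subst; exact (proj2 (HR _ _ Hlr) eq_refl).
Qed.

Theorem top_termination_lifts (c : sym) (R T : srs) :
  respects_marker c T -> strictly_marked c R ->
  top_terminating_rel R T -> terminating_rel R T.
Proof.
  intros HT HR Htop (f & Hf & Hinf).
  assert (Hcount : forall i, occurrences c (f i) = occurrences c (f 0)).
  { induction i as [| i IH]; auto; rewrite <- IH; symmetry.
    destruct (Hf i) as [Hr | Hs].
    - exact (occurrences_step c R _ _ (strictly_marked_respects c R HR) Hr).
    - exact (occurrences_step c T _ _ HT Hs). }
  assert (Hblocks : forall n, exists i, n <= i /\ exists j, j < occurrences c (f 0) /\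
                      topstep R (block c j (f i)) (block c j (f (S i)))).
  { intros n; destruct (Hinf n) as (i & Hi & Hr).
    destruct (block_marked_step c R _ _ HR Hr) as (j & Hj & Hblock & _).
    exists i; split; auto; exists j; rewrite <- (Hcount i); split; auto. }
  destruct (pigeonhole _ _ Hblocks) as [j Hj].
  apply (stutter_removal (topstep R) (rstep T) (fun i => block c j (f i))); auto.
  - intros x; exact (topstep_irreflexive c R x HR).
  - intros i; destruct (Hf i) as [Hr | Hs].
    + destruct (block_marked_step c R _ _ HR Hr) as (j0 & _ & Hblock & Hother).
      destruct (PeanoNat.Nat.eq_dec j j0) as [-> |]; auto.
    + destruct (block_step c T j _ _ HT Hs); auto.
Qed.

Lemma rev_srs_sub (Q Q' : srs) : subsrs Q Q' -> subsrs (rev_srs Q) (rev_srs Q').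
Proof. intros Hsub p (l & r & H & E); exists l, r; auto. Qed.

Ltac check_marker :=
  first [ left; split; simpl; intuition discriminate
        | right; eexists _, _; split; [reflexivity | split; [reflexivity |
            split; simpl; intuition discriminate]] ].

Ltac check_strictly_marked :=
  split; [eexists _, _; split; [reflexivity | split; [reflexivity |
            split; simpl; intuition discriminate]] | discriminate].

Lemma T_respects_lhd : respects_marker lhd T_rules.
Proof.
  intros l r H; unfold T_rules, D_T, A_rules, B_rules in H.
  repeat destruct H as [H | H]; injection H as -> ->; check_marker.
Qed.

Lemma B_strictly_marked : strictly_marked lhd B_rules.
Proof.
  intros l r H; unfold B_rules in H.
  repeat destruct H as [H | H]; injection H as -> ->; check_strictly_marked.
Qed.

Lemma rev_T_respects_rhd : respects_marker rhd (rev_srs T_rules).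
Proof.
  intros l r (l0 & r0 & H & E); injection E as -> ->.
  unfold T_rules, D_T, A_rules, B_rules in H.
  repeat destruct H as [H | H]; injection H as -> ->; simpl; check_marker.
Qed.

Lemma rev_D_strictly_marked : strictly_marked rhd (rev_srs D_T).
Proof.
  intros l r (l0 & r0 & H & E); injection E as -> ->; unfold D_T in H.
  repeat destruct H as [H | H]; injection H as -> ->; simpl; check_strictly_marked.
Qed.

Theorem mainTheorem7 :
  (forall R : srs, subsrs R B_rules ->
     top_terminating_rel R T_rules -> terminating_rel R T_rules) /\
  (forall Q : srs, subsrs Q D_T ->
     top_terminating_rel (rev_srs Q) (rev_srs T_rules) ->
     terminating_rel (rev_srs Q) (rev_srs T_rules)).
Proof.
  split.
  - intros R HRB; apply (top_termination_lifts lhd).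
    + exact T_respects_lhd.
    + exact (strictly_marked_sub lhd R B_rules HRB B_strictly_marked).
  - intros Q HQD; apply (top_termination_lifts rhd).
    + exact rev_T_respects_rhd.
    + exact (strictly_marked_sub rhd _ _ (rev_srs_sub Q D_T HQD) rev_D_strictly_marked).
Qed.
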